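(* Consider the Distributed Guided Local Search (DGLS) algorithm described in the context, with evaporation rate $0<\gamma<1$ and any update scope. Then at every round, for every agent $i$, neighbor $j$ and values $d_i\in D_i,d_j\in D_j$, the effective cost satisfies $\mathrm{EffCost}_A(d_i,j,d_j)\le \hat f_{ij}+1/(1-\gamma)$ in the additive manner, and $\mathrm{EffCost}_M(d_i,j,d_j)\le \hat f_{ij}\cdot[1+1/(1-\gamma)]$ in the multiplicative manner.
   Context: A (binary) Distributed Constraint Optimization Problem (DCOP) consists of agents $1,\dots,n$, each controlling one variable $x_i$ with finite domain $D_i$, and binary constraint functions $f_{ij}:D_i\times D_j\to\mathbb{R}_{\ge0}$ with $f_{ji}=f_{ij}^T$; $\mathcal{N}_i$ is the set of neighbors of $i$. Write $\check f_{ij}=\min_{d_i,d_j} f_{ij}(d_i,d_j)$, $\hat f_{ij}=\max_{d_i,d_j} f_{ij}(d_i,d_j)$. DGLS is parameterized by a manner (additive $A$ or multiplicative $M$), an evaporation rate $\gamma$, and a scope ($cel$, $tab$, $row$, $col$). Each agent $i$ keeps, for each $j\in\mathcal{N}_i$, a cost modifier $M_{ij}$ (a $|D_i|\times|D_j|$ real matrix), initialized to $0$. The effective cost is $\mathrm{EffCost}_A(d_i,j,d_j)=f_{ij}(d_i,d_j)+M_{ij}(d_i,d_j)$ (additive) or $\mathrm{EffCost}_M(d_i,j,d_j)=f_{ij}(d_i,d_j)\cdot[1+M_{ij}(d_i,d_j)]$ (multiplicative). Initially each agent picks a random value $d_i\in D_i$ and sends it to its neighbors. Rounds are synchronous; in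 each round agent $i$: (1) sets $\bar P_i=\emptyset$ and receives the neighbors' current values $d_j$; (2) computes $d_i^*\in\arg\min_{d\in D_i}\sum_{j\in\mathcal{N}_i}\mathrm{EffCost}(d,j,d_j)$ and gain $\Delta_i=\sum_{j}[\mathrm{EffCost}(d_i,j,d_j)-\mathrm{EffCost}(d_i^*,j,d_j)]$, and exchanges gains with neighbors; (3) if $\Delta_i>0$ and $\Delta_i$ is the best improvement among itself and its neighbors, it sets $d_i\gets d_i^*$; otherwise, if no neighbor can improve (all neighbors' gains are $\le 0$), then for each $j\in\mathcal{N}_i$ it declares $f_{ij}$ violated with probability $\eta=\frac{f_{ij}(d_i,d_j)-\check f_{ij}}{\hat f_{ij}-\check f_{ij}}$, and for each violated one adds $j$ to $\bar P_i$ and sends a SYNC message to $j$; (4) lets $\tilde P_i$ be the set of neighbors from which it received SYNC this round; (5) for each $j\in\mathcal{N}_i$: first evaporates, $M_{ij}\gets\gamma M_{ij}$ entrywise, then updates with current values $d_i,d_j$: scope $cel$: if $j\in\bar P_i\cup\tilde P_i$, $M_{ij}(d_i,d_j)\mathrel{+}=1$; scope $tab$: if $j\in\bar P_i\cup\tilde P_i$, all entries of $M_{ij}$ are increased by 1; scope $row$: if $j\in\bar P_i$, $M_{ij}(d_i,d_j')\mathrel{+}=1$ for all $d_j'$; if $j\in\tilde P_i$, $M_{ij}(d_i',d_j)\mathrel{+}=1$ for all $d_i'$; if $j\in\bar P_i\cap\tilde P_i$, $M_{ij}(d_i,d_j)\mathrel{-}=1$; scope $col$: same as $row$ with the roles exchanged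 (if $j\in\bar P_i$ increment column $d_j$, if $j\in\tilde P_i$ increment row $d_i$, and subtract 1 at $(d_i,d_j)$ if both); (6) sends its value $d_i$ to its neighbors. *)

From mathcomp Require Import all_boot all_order all_algebra.
Set Implicit Arguments. Unset Strict Implicit. Unset Printing Implicit Defensive.
Import Order.TTheory GRing.Theory Num.Theory.
Local Open Scope ring_scope.

Inductive manner := Additive | Multiplicative.
Inductive scope := Cel | Tab | Row | Col.

Section DGLS.
Variable R : realFieldType.
Variable n : nat.
Variable dom : 'I_n -> nat.
Variable adj : rel 'I_n.
Variable f : forall i j : 'I_n, 'M[R]_(dom i, dom j).
Variable gamma : R.
Variable mnr : manner.
Variable scp : scope.

(** max and min of f_ij.  Since f_ij >= 0 and domains are nonempty, the
    seeds 0 (for max) and fhat (for min) do not affect the value. *)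
Definition fhat (i j : 'I_n) : R :=
  \big[Num.max/0]_(a < dom i) \big[Num.max/0]_(b < dom j) f i j a b.
Definition fcheck (i j : 'I_n) : R :=
  \big[Num.min/fhat i j]_(a < dom i) \big[Num.min/fhat i j]_(b < dom j) f i j a b.

Definition effcost (Mod : forall i j : 'I_n, 'M[R]_(dom i, dom j))
  (i : 'I_n) (a : 'I_(dom i)) (j : 'I_n) (b : 'I_(dom j)) : R :=
  match mnr with
  | Additive => f i j a b + Mod i j a b
  | Multiplicative => f i j a b * (1 + Mod i j a b)
  end.

Section Round.
Variable d : forall i : 'I_n, 'I_(dom i).
Variable Mod : forall i j : 'I_n, 'M[R]_(dom i, dom j).
(** the chosen minimizers d_i^* and the random violation outcomes *)
Variable star : forall i : 'I_n, 'I_(dom i).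
Variable viol : 'I_n -> 'I_n -> bool.

Definition localcost (i : 'I_n) (x : 'I_(dom i)) : R :=
  \sum_(j | adj i j) effcost Mod x (d j).

Definition star_ok : Prop :=
  forall i (x : 'I_(dom i)), localcost (star i) <= localcost x.

Definition gain (i : 'I_n) : R := localcost (d i) - localcost (star i).

Definition moves (i : 'I_n) : bool :=
  (0 < gain i) &&
  [forall j, adj i j ==> ((gain j < gain i) || ((gain j == gain i) && (i < j)%N))].

Definition stuck (i : 'I_n) : bool := [forall j, adj i j ==> (gain j <= 0)].

(** probability eta that [i] declares f_ij violated *)
Definition eta (i j : 'I_n) : R :=
  (f i j (d i) (d j) - fcheck i j) / (fhat i j - fcheck i j).

(** the random outcomes are ones of positive probability *)
Definition viol_ok : Prop :=
  forall i j, adj i j -> ~~ moves i -> stuck i ->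
    (viol i j -> 0 < eta i j) /\ (~~ viol i j -> eta i j < 1).

Definition Pbar (i j : 'I_n) : bool := [&& adj i j, ~~ moves i, stuck i & viol i j].
Definition Ptil (i j : 'I_n) : bool := Pbar j i.

Definition incr (i j : 'I_n) (a : 'I_(dom i)) (b : 'I_(dom j)) : R :=
  let pb := Pbar i j in let pt := Ptil i j in
  let ea := a == d i in let eb := b == d j in
  match scp with
  | Cel => ((pb || pt) && ea && eb)%:R
  | Tab => (pb || pt)%:R
  | Row => (pb && ea)%:R + (pt && eb)%:R - (pb && pt && ea && eb)%:R
  | Col => (pb && eb)%:R + (pt && ea)%:R - (pb && pt && ea && eb)%:R
  end.

Definition next_Mod (i j : 'I_n) : 'M[R]_(dom i, dom j) :=
  \matrix_(a, b) (gamma * Mod i j a b + incr a b).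

Definition next_d (i : 'I_n) : 'I_(dom i) := if moves i then star i else d i.

End Round.

(** A (possible) execution of DGLS: [d t], [Mod t] are the values and
    modifiers at the start of round [t]. *)
Definition dgls_run (d : nat -> forall i : 'I_n, 'I_(dom i))
  (Mod : nat -> forall i j : 'I_n, 'M[R]_(dom i, dom j))
  (star : nat -> forall i : 'I_n, 'I_(dom i))
  (viol : nat -> 'I_n -> 'I_n -> bool) : Prop :=
  (forall i j, Mod 0%N i j = 0) /\
  forall t : nat,
    [/\ star_ok (d t) (Mod t) (star t),
        viol_ok (d t) (Mod t) (star t) (viol t),
        (forall i, d t.+1 i = next_d (d t) (Mod t) (star t) i) &
        (forall i j, Mod t.+1 i j = next_Mod (d t) (Mod t) (star t) (viol t) i j)].

End DGLS.

Definition dcop (R : realFieldType) (n : nat) (dom : 'I_n -> nat) (adj : rel 'I_n)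
  (f : forall i j : 'I_n, 'M[R]_(dom i, dom j)) : Prop :=
  [/\ forall i, (0 < dom i)%N,
      forall i j, adj i j = adj j i,
      forall i, ~~ adj i i,
      forall i j, f j i = (f i j)^T &
      forall i j a b, 0 <= f i j a b].

(* Every update first scales a modifier by gamma and then adds an increment
   of at most 1, so the modifiers stay below the fixed point 1/(1 - gamma)
   of x |-> gamma x + 1, which they start under.  Since the costs lie in
   [0, fhat], both effective costs are then bounded as claimed. *)
From mathcomp Require Import all_boot all_order all_algebra.
From mathcomp Require Import ring.
Set Implicit Arguments. Unset Strict Implicit.
Import Order.TTheory GRing.Theory Num.Theory.
Local Open Scope ring_scope.

Section AffineRecurrence.
Variable R : realFieldType.

Lemma inv_1subr_ge0 (gamma : R) : gamma < 1 -> 0 <= 1 / (1 - gamma).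
Proof. by move=> g_lt1; rewrite divr_ge0 // subr_ge0 ltW. Qed.

Lemma le_affine_fixpoint (gamma : R) (u : nat -> R) :
  0 <= gamma < 1 -> u 0%N <= 1 / (1 - gamma) ->
  (forall t, u t.+1 <= gamma * u t + 1) -> forall t, u t <= 1 / (1 - gamma).
Proof.
move=> /andP[g_ge0 g_lt1] u0_le u_step.
have fixpoint : gamma * (1 / (1 - gamma)) + 1 = 1 / (1 - gamma).
  by field; rewrite subr_eq0 eq_sym lt_eqF.
elim=> [//|t IHt]; rewrite -fixpoint.
by apply: le_trans (u_step t) _; rewrite lerD2r ler_wpM2l.
Qed.

Lemma ler_mul1D (x y m B : R) :
  0 <= x <= y -> m <= B -> 0 <= B -> x * (1 + m) <= y * (1 + B).
Proof.
move=> /andP[x_ge0 x_le_y] m_le_B B_ge0.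
have RHS_ge0 : 0 <= y * (1 + B).
  by rewrite mulr_ge0 ?addr_ge0 // (le_trans x_ge0).
have [m1_lt0 | m1_ge0] := ltrP (1 + m) 0.
  by apply: le_trans RHS_ge0; rewrite mulr_ge0_le0 // ltW.
by apply: ler_pM => //; rewrite lerD2l.
Qed.

End AffineRecurrence.

Lemma f_le_fhat (R : realFieldType) (n : nat) (dom : 'I_n -> nat)
  (f : forall i j : 'I_n, 'M[R]_(dom i, dom j)) i j a b :
  f i j a b <= fhat f i j.
Proof. by apply: le_trans (le_bigmax _ _ a); apply: le_bigmax. Qed.

Section Modifiers.
Variables (R : realFieldType) (n : nat) (dom : 'I_n -> nat) (adj : rel 'I_n).
Variables (f : forall i j : 'I_n, 'M[R]_(dom i, dom j)) (gamma : R).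
Variables (mnr : manner) (scp : scope).

Lemma incr_le1 d Mod star viol i j (a : 'I_(dom i)) (b : 'I_(dom j)) :
  incr adj f mnr scp d Mod star viol a b <= 1.
Proof.
rewrite /incr; case: scp;
case: (Pbar _ _ _ _ _ _ _ i j); case: (Ptil _ _ _ _ _ _ _ i j);
case: (a == d i); case: (b == d j) => /=;
by rewrite ?addr0 ?subr0 ?add0r ?addrK ?subrr ?ler01 ?lexx.
Qed.

Lemma dgls_Mod_le d Mod star viol :
  0 <= gamma < 1 -> dgls_run adj f gamma mnr scp d Mod star viol ->
  forall t i j a b, Mod t i j a b <= 1 / (1 - gamma).
Proof.
move=> g_bounds [Mod0 run_step] t i j a b.
apply: (le_affine_fixpoint (u := fun t => Mod t i j a b) g_bounds) => [|s].
  by rewrite Mod0 mxE inv_1subr_ge0 //; case/andP: g_bounds.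
have [_ _ _ ->] := run_step s.
by rewrite /next_Mod mxE lerD2l incr_le1.
Qed.

End Modifiers.

Theorem corollary1 (R : realFieldType) (n : nat) (dom : 'I_n -> nat) (adj : rel 'I_n)
  (f : forall i j : 'I_n, 'M[R]_(dom i, dom j)) (gamma : R) (mnr : manner) (scp : scope)
  (d : nat -> forall i : 'I_n, 'I_(dom i))
  (Mod : nat -> forall i j : 'I_n, 'M[R]_(dom i, dom j))
  (star : nat -> forall i : 'I_n, 'I_(dom i))
  (viol : nat -> 'I_n -> 'I_n -> bool) :
  dcop adj f -> 0 < gamma < 1 ->
  dgls_run adj f gamma mnr scp d Mod star viol ->
  forall (t : nat) (i j : 'I_n), adj i j ->
  forall (a : 'I_(dom i)) (b : 'I_(dom j)),
    effcost f mnr (Mod t) a b <=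
      (if mnr is Additive then fhat f i j + 1 / (1 - gamma)
       else (* Multiplicative *) fhat f i j * (1 + 1 / (1 - gamma))).
Proof.
move=> [_ _ _ _ f_ge0] /andP[g_gt0 g_lt1] run t i j _ a b.
have g_bounds : 0 <= gamma < 1 by rewrite ltW.
have Mod_le := dgls_Mod_le g_bounds run t a b.
have f_le := f_le_fhat f a b.
rewrite /effcost; case: mnr {run}.
- exact: lerD.
- apply: ler_mul1D => //; first by rewrite f_ge0.
  exact: inv_1subr_ge0.
Qed.
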